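(* Let $(W,\odot,\mathbb{1})$ be a monoid and let $(M,+,\mathbb{0},\otimes)$ be an $\omega$-continuous (left) $W$-module, with module of weightings $\mathrm{Wt}=M^\Sigma$. For every $W$-wgcl program $C$, the transformer $\mathrm{wp}[\![C]\!]$ is (1) monotone: for all $f,g\in\mathrm{Wt}$, $f\preceq g$ implies $\mathrm{wp}[\![C]\!](f)\preceq\mathrm{wp}[\![C]\!](g)$; (2) strict: $\mathrm{wp}[\![C]\!](\mathbb{0})=\mathbb{0}$; (3) additive: for all $f,g\in\mathrm{Wt}$, $\mathrm{wp}[\![C]\!](f+g)=\mathrm{wp}[\![C]\!](f)+\mathrm{wp}[\![C]\!](g)$; (4) if moreover the monoid $W$ is commutative, then $\mathrm{wp}$ is homogeneous: for all $a\in W$ and $f\in\mathrm{Wt}$, $\mathrm{wp}[\![C]\!](a\otimes f)=a\otimes\mathrm{wp}[\![C]\!](f)$ (so that, together with (3), $\mathrm{wp}[\![C]\!]$ is linear).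
   Context: A (left) module over a monoid $(W,\odot,\mathbb{1})$ is a commutative monoid $(M,+,\mathbb{0})$ with an action $\otimes\colon W\times M\to M$ such that $(v\odot w)\otimes a=v\otimes(w\otimes a)$, $v\otimes(a+b)=(v\otimes a)+(v\otimes b)$, $\mathbb{1}\otimes a=a$ and $v\otimes\mathbb{0}=\mathbb{0}$ for all $v,w\in W$, $a,b\in M$. The natural order on $M$ is $a\preceq b$ iff there is $c\in M$ with $a+c=b$; $M$ is naturally ordered if $\preceq$ is a partial order. $M$ is $\omega$-continuous if it is naturally ordered, every increasing $\omega$-chain in $(M,\preceq)$ has a supremum, and addition (in each argument) and, for each fixed $w\in W$, the map $a\mapsto w\otimes a$ preserve suprema of increasing $\omega$-chains. Program states: $\Sigma$ is the set of states (maps from program variables to values); an expression $E$ has value $E(\sigma)$ in state $\sigma$; guards $\varphi$ are predicates on states; $\sigma[x\mapsto v]$ is $\sigma$ with $x$ updated to $v$. $W$-wgcl programs are generated by $C::= x:=E \mid C;C \mid \mathtt{if}(\varphi)\{C\}\mathtt{else}\{C\} \mid \{C\}\oplus\{C\} \mid \mathtt{weight}\ a\ (a\in W) \mid \mathtt{while}(\varphi)\{C\}$. Weightings: $\mathrm{Wt}=M^{\Sigma}$ with pointwise addition, zero $\mathbb{0}$, scalar multiplication $(a\otimes f)(\sigma)=a\otimes f(\sigma)$ and pointwise natural order $\preceq$. $([\varphi]\cdot f)(\sigma)=f(\sigma)$ if $\sigma\models\varphi$ and $\mathbb{0}$ otherwise; $f[x/E](\sigma)=f(\sigma[x\mapsto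 E(\sigma)])$. The weakest preweighting transformer: $\mathrm{wp}[\![x:=E]\!](f)=f[x/E]$; $\mathrm{wp}[\![C_1;C_2]\!](f)=\mathrm{wp}[\![C_1]\!](\mathrm{wp}[\![C_2]\!](f))$; $\mathrm{wp}[\![\mathtt{if}(\varphi)\{C_1\}\mathtt{else}\{C_2\}]\!](f)=[\varphi]\cdot\mathrm{wp}[\![C_1]\!](f)+[\neg\varphi]\cdot\mathrm{wp}[\![C_2]\!](f)$; $\mathrm{wp}[\![\{C_1\}\oplus\{C_2\}]\!](f)=\mathrm{wp}[\![C_1]\!](f)+\mathrm{wp}[\![C_2]\!](f)$; $\mathrm{wp}[\![\mathtt{weight}\ a]\!](f)=a\otimes f$; $\mathrm{wp}[\![\mathtt{while}(\varphi)\{C'\}]\!](f)$ is the least fixed point (w.r.t. $\preceq$) of $X\mapsto[\neg\varphi]\cdot f+[\varphi]\cdot\mathrm{wp}[\![C']\!](X)$. *)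

From Stdlib Require Import ClassicalEpsilon.
From mathcomp Require Import ssreflect ssrfun ssrbool eqtype.

Set Implicit Arguments.
Unset Strict Implicit.
Unset Printing Implicit Defensive.

Record is_monoid (W : Type) (mul : W -> W -> W) (one : W) : Prop := {
  mon_assoc : forall u v w, mul u (mul v w) = mul (mul u v) w;
  mon_mul1l : forall w, mul one w = w;
  mon_mul1r : forall w, mul w one = w }.

Definition is_commutative (W : Type) (mul : W -> W -> W) : Prop :=
  forall v w, mul v w = mul w v.

Section Module.
Variables (W M : Type) (mul : W -> W -> W) (one : W)
          (add : M -> M -> M) (zero : M) (act : W -> M -> M).

Record is_module : Prop := {
  mod_addA : forall a b c, add a (add b c) = add (add a b) c;
  mod_addC : forall a b, add a b = add b a;
  mod_add0l : forall a, add zero a = a;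
  mod_actM : forall v w a, act (mul v w) a = act v (act w a);
  mod_actD : forall v a b, act v (add a b) = add (act v a) (act v b);
  mod_act1 : forall a, act one a = a;
  mod_act0 : forall v, act v zero = zero }.

Definition nat_le (a b : M) : Prop := exists c, add a c = b.

Definition naturally_ordered : Prop :=
  forall a b, nat_le a b -> nat_le b a -> a = b.

Definition increasing_chain (c : nat -> M) : Prop :=
  forall n, nat_le (c n) (c (S n)).

Definition is_sup (c : nat -> M) (s : M) : Prop :=
  (forall n, nat_le (c n) s) /\
  (forall u, (forall n, nat_le (c n) u) -> nat_le s u).

Record is_omega_continuous_module : Prop := {
  ocm_module : is_module;
  ocm_nat_ordered : naturally_ordered;
  ocm_sup_exists : forall c, increasing_chain c -> exists s, is_sup c s;
  ocm_addl_cont : forall a c s, increasing_chain c -> is_sup c s ->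
      is_sup (fun n => add a (c n)) (add a s);
  ocm_addr_cont : forall a c s, increasing_chain c -> is_sup c s ->
      is_sup (fun n => add (c n) a) (add s a);
  ocm_act_cont : forall w c s, increasing_chain c -> is_sup c s ->
      is_sup (fun n => act w (c n)) (act w s) }.

End Module.

Section Programs.
Variables (Var : eqType) (Val : Type).

Definition state := Var -> Val.

Definition upd (s : state) (x : Var) (v : Val) : state :=
  fun y => if y == x then v else s y.

Inductive prog (W : Type) : Type :=
  | Assign : Var -> (state -> Val) -> prog W
  | Seq : prog W -> prog W -> prog W
  | Ite : (state -> bool) -> prog W -> prog W -> prog W
  | Choice : prog W -> prog W -> prog W
  | Weight : W -> prog W
  | While : (state -> bool) -> prog W -> prog W.

End Programs.

Section Wp.
Variables (Var : eqType) (Val : Type) (W M : Type)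
          (add : M -> M -> M) (zero : M) (act : W -> M -> M).

Definition Wt := state Var Val -> M.

Definition wt_add (f g : Wt) : Wt := fun s => add (f s) (g s).
Definition wt_zero : Wt := fun _ => zero.
Definition wt_scale (a : W) (f : Wt) : Wt := fun s => act a (f s).
Definition wt_le (f g : Wt) : Prop := forall s, nat_le add (f s) (g s).
Definition wt_guard (phi : state Var Val -> bool) (f : Wt) : Wt :=
  fun s => if phi s then f s else zero.
Definition wt_subst (f : Wt) (x : Var) (E : state Var Val -> Val) : Wt :=
  fun s => f (upd s x (E s)).

(** least fixed point w.r.t. wt_le (chosen classically; zero if none exists) *)
Definition is_lfp (F : Wt -> Wt) (X : Wt) : Prop :=
  F X = X /\ (forall Y, F Y = Y -> wt_le X Y).

Definition lfp (F : Wt -> Wt) : Wt :=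
  match excluded_middle_informative (exists X, is_lfp F X) with
  | left h => proj1_sig (constructive_indefinite_description _ h)
  | right _ => wt_zero
  end.

Fixpoint wp (C : prog Var Val W) (f : Wt) : Wt :=
  match C with
  | Assign x E => wt_subst f x E
  | Seq C1 C2 => wp C1 (wp C2 f)
  | Ite phi C1 C2 =>
      wt_add (wt_guard phi (wp C1 f)) (wt_guard (fun s => ~~ phi s) (wp C2 f))
  | Choice C1 C2 => wt_add (wp C1 f) (wp C2 f)
  | Weight a => wt_scale a f
  | While phi C' =>
      lfp (fun X => wt_add (wt_guard (fun s => ~~ phi s) f)
                           (wt_guard phi (wp C' X)))
  end.

End Wp.

From mathcomp Require Import ssreflect ssrfun ssrbool eqtype ssrnat.
From Stdlib Require Import FunctionalExtensionality ClassicalEpsilon.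

(* Call a transformer healthy if it is omega-continuous, strict and additive.
   Substitutions, guards and scalings are healthy, and healthy transformers
   are closed under composition and pointwise sums; this covers every
   construct but the loop.  For a loop, continuity of the body gives Kleene's
   theorem: wp of the loop is the pointwise supremum of its finite unrollings,
   each healthy by the closure properties.  A supremum of a chain of healthy
   transformers is healthy again: strictness and additivity pass to the limit
   because addition is continuous, and continuity by exchanging the two
   suprema.  Homogeneity propagates in the same way.  Monotonicity is implied by continuity. *)

Set Implicit Arguments.
Unset Strict Implicit.
Unset Printing Implicit Defensive.

Section WpHealthiness.
Variables (W M : Type) (mul : W -> W -> W) (one : W)
  (add : M -> M -> M) (zero : M) (act : W -> M -> M).
Hypothesis HM : is_omega_continuous_module mul one add zero act.

Local Notation le := (nat_le add).
Local Notation sup := (is_sup add).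

Lemma addA a b c : add a (add b c) = add (add a b) c.
Proof. exact: (mod_addA (ocm_module HM)). Qed.

Lemma addC a b : add a b = add b a.
Proof. exact: (mod_addC (ocm_module HM)). Qed.

Lemma add0l a : add zero a = a.
Proof. exact: (mod_add0l (ocm_module HM)). Qed.

Lemma add0r a : add a zero = a.
Proof. by rewrite addC add0l. Qed.

Lemma addACA a b c d : add (add a b) (add c d) = add (add a c) (add b d).
Proof. by rewrite -!addA (addA b c d) (addC b c) -addA. Qed.

Lemma actD v a b : act v (add a b) = add (act v a) (act v b).
Proof. exact: (mod_actD (ocm_module HM)). Qed.

Lemma act0 v : act v zero = zero.
Proof. exact: (mod_act0 (ocm_module HM)). Qed.

Lemma actM v w a : act (mul v w) a = act v (act w a).
Proof. exact: (mod_actM (ocm_module HM)). Qed.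

Lemma le_refl a : le a a.
Proof. by exists zero; rewrite add0r. Qed.

Lemma le_trans a b c : le a b -> le b c -> le a c.
Proof. by move=> [x <-] [y <-]; exists (add x y); rewrite addA. Qed.

Lemma le0 a : le zero a.
Proof. by exists a; rewrite add0l. Qed.

Lemma le_add a a' b b' : le a a' -> le b b' -> le (add a b) (add a' b').
Proof. by move=> [x <-] [y <-]; exists (add x y); rewrite addACA. Qed.

Lemma chain_le c : increasing_chain add c -> forall m k, le (c m) (c (m + k)).
Proof.
move=> Hc m; elim=> [|k IH]; first by rewrite addn0; apply: le_refl.
by rewrite addnS; apply: le_trans IH (Hc _).
Qed.

Lemma sup_unique c s t : sup c s -> sup c t -> s = t.
Proof.
by move=> [Hs Hsl] [Ht Htl]; apply: (ocm_nat_ordered HM); [apply: Hsl Ht | apply: Htl Hs].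
Qed.

Lemma sup_const a : sup (fun=> a) a.
Proof. by split=> [n|u Hu]; [apply: le_refl | apply: Hu 0]. Qed.

Lemma sup_shift c s : increasing_chain add c -> sup c s -> sup (fun n => c n.+1) s.
Proof.
move=> Hc [Hs Hsl]; split=> [n|u Hu]; first exact: Hs.
by apply: Hsl => n; apply: le_trans (Hc n) (Hu n).
Qed.

Lemma sup_add a b A B : increasing_chain add a -> increasing_chain add b ->
  sup a A -> sup b B -> sup (fun n => add (a n) (b n)) (add A B).
Proof.
move=> Ha Hb HA HB; split=> [n|u Hu]; first by apply: le_add; [apply: HA.1 | apply: HB.1].
apply: (ocm_addr_cont HM B Ha HA).2 => m.
apply: (ocm_addl_cont HM (a m) Hb HB).2 => n.
apply: le_trans (Hu (m + n)); apply: le_add; first exact: chain_le.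
by rewrite addnC; apply: chain_le.
Qed.

Lemma sup_exchange (G : nat -> nat -> M) (row col : nat -> M) s :
  (forall n, sup (G n) (row n)) -> (forall k, sup (G^~ k) (col k)) ->
  sup col s -> sup row s.
Proof.
move=> Hrow Hcol [Hs Hsl]; split=> [n|u Hu].
  by apply: (Hrow n).2 => k; apply: le_trans ((Hcol k).1 n) (Hs k).
by apply: Hsl => k; apply: (Hcol k).2 => n; apply: le_trans ((Hrow n).1 k) (Hu n).
Qed.

Variables (Var : eqType) (Val : Type).

Local Notation Wt := (Wt Var Val M).
Local Notation wt0 := (@wt_zero Var Val M zero).

Implicit Types (f g s : Wt) (c : nat -> Wt) (F G : Wt -> Wt).

Definition wt_chain c := forall n, wt_le add (c n) (c n.+1).

Definition wt_sup c s := forall st, sup (fun n => c n st) (s st).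

Definition wt_continuous F :=
  forall c s, wt_chain c -> wt_sup c s -> wt_sup (fun n => F (c n)) (F s).

Definition wt_monotone F := forall f g, wt_le add f g -> wt_le add (F f) (F g).

Definition wt_homogeneous F :=
  forall a f, F (wt_scale act a f) = wt_scale act a (F f).

Record wt_healthy F : Prop := {
  healthy_cont : wt_continuous F;
  healthy_strict : F wt0 = wt0;
  healthy_additive : forall f g, F (wt_add add f g) = wt_add add (F f) (F g) }.

Lemma wt_chain_at c st : wt_chain c -> increasing_chain add (fun n => c n st).
Proof. by move=> Hc n; apply: Hc. Qed.

Lemma wt_sup_unique c s t : wt_sup c s -> wt_sup c t -> s = t.
Proof. by move=> Hs Ht; apply: functional_extensionality => st; apply: sup_unique. Qed.

Lemma wt_sup_exists c : wt_chain c -> exists s, wt_sup c s.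
Proof.
move=> Hc; have Hex st := ocm_sup_exists HM (wt_chain_at st Hc).
exists (fun st => proj1_sig (constructive_indefinite_description _ (Hex st))).
by move=> st; case: constructive_indefinite_description.
Qed.

Lemma wt_sup_add c d s t : wt_chain c -> wt_chain d -> wt_sup c s -> wt_sup d t ->
  wt_sup (fun n => wt_add add (c n) (d n)) (wt_add add s t).
Proof.
by move=> Hc Hd Hs Ht st; apply: sup_add; [apply: wt_chain_at .. | apply: Hs | apply: Ht].
Qed.

Lemma wt_add0l f : wt_add add wt0 f = f.
Proof. by apply: functional_extensionality => st; apply: add0l. Qed.

Lemma wt_addACA f g h k :
  wt_add add (wt_add add f g) (wt_add add h k)
  = wt_add add (wt_add add f h) (wt_add add g k).
Proof. by apply: functional_extensionality => st; apply: addACA. Qed.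

Lemma wt_scaleD a f g :
  wt_scale act a (wt_add add f g) = wt_add add (wt_scale act a f) (wt_scale act a g).
Proof. by apply: functional_extensionality => st; apply: actD. Qed.

Lemma continuous_monotone F : wt_continuous F -> wt_monotone F.
Proof.
move=> HF f g Hfg.
pose c n := if n is 0 then f else g.
have Hc : wt_chain c by case=> [|n] st /=; [apply: Hfg | apply: le_refl].
have Hs : wt_sup c g.
  move=> st; split=> [[|n]|u Hu]; [exact: Hfg | exact: le_refl | exact: Hu 1].
by move=> st; apply: (HF c g Hc Hs st).1 0.
Qed.

Lemma continuous_chain F c : wt_continuous F -> wt_chain c -> wt_chain (fun n => F (c n)).
Proof. by move=> /continuous_monotone HF Hc n; apply: HF. Qed.

Lemma continuous_const g : wt_continuous (fun=> g).
Proof. by move=> c s _ _ st; apply: sup_const. Qed.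

Lemma continuous_comp F G :
  wt_continuous F -> wt_continuous G -> wt_continuous (fun f => F (G f)).
Proof. by move=> HF HG c s Hc Hs; apply: HF (HG c s Hc Hs); apply: continuous_chain. Qed.

Lemma continuous_add F G : wt_continuous F -> wt_continuous G ->
  wt_continuous (fun f => wt_add add (F f) (G f)).
Proof.
move=> HF HG c s Hc Hs.
by apply: wt_sup_add; [apply: continuous_chain .. | apply: HF | apply: HG].
Qed.

Lemma healthy_zero : wt_healthy (fun=> wt0).
Proof. by split=> [|//|f g]; [apply: continuous_const | rewrite wt_add0l]. Qed.

Lemma healthy_id : wt_healthy id.
Proof. by split. Qed.

Lemma healthy_comp F G : wt_healthy F -> wt_healthy G -> wt_healthy (fun f => F (G f)).
Proof.
move=> [HFc HF0 HFD] [HGc HG0 HGD]; split=> [|| f g].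
- exact: continuous_comp.
- by rewrite HG0 HF0.
- by rewrite HGD HFD.
Qed.

Lemma healthy_add F G : wt_healthy F -> wt_healthy G ->
  wt_healthy (fun f => wt_add add (F f) (G f)).
Proof.
move=> [HFc HF0 HFD] [HGc HG0 HGD]; split=> [|| f g].
- exact: continuous_add.
- by rewrite HF0 HG0 wt_add0l.
- by rewrite HFD HGD wt_addACA.
Qed.

Lemma healthy_guard phi : wt_healthy (wt_guard zero phi).
Proof.
split=> [c s _ Hs st|| f g]; rewrite /wt_guard.
- by case: (phi st); [apply: Hs | apply: sup_const].
- by apply: functional_extensionality => st; case: (phi st).
- by apply: functional_extensionality => st; rewrite /wt_add; case: (phi st); rewrite ?add0l.
Qed.

Lemma healthy_scale a : wt_healthy (wt_scale act a).
Proof.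
split=> [c s Hc Hs st|| f g]; last exact: wt_scaleD.
- exact: ocm_act_cont HM a _ _ (wt_chain_at st Hc) (Hs st).
- by apply: functional_extensionality => st; apply: act0.
Qed.

Lemma healthy_subst x E : wt_healthy (fun f => wt_subst f x E).
Proof. by split=> // c s _ Hs st; apply: Hs. Qed.

Lemma homogeneous_zero : wt_homogeneous (fun=> wt0).
Proof.
by move=> a f; apply: functional_extensionality => st; rewrite /wt_scale act0.
Qed.

Lemma homogeneous_id : wt_homogeneous id.
Proof. by []. Qed.

Lemma homogeneous_comp F G :
  wt_homogeneous F -> wt_homogeneous G -> wt_homogeneous (fun f => F (G f)).
Proof. by move=> HF HG a f; rewrite HG HF. Qed.

Lemma homogeneous_add F G : wt_homogeneous F -> wt_homogeneous G ->
  wt_homogeneous (fun f => wt_add add (F f) (G f)).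
Proof. by move=> HF HG a f; rewrite HF HG wt_scaleD. Qed.

Lemma homogeneous_guard phi : wt_homogeneous (wt_guard zero phi).
Proof.
move=> a f; apply: functional_extensionality => st.
by rewrite /wt_guard /wt_scale; case: (phi st); rewrite ?act0.
Qed.

Lemma homogeneous_scale b : is_commutative mul -> wt_homogeneous (wt_scale act b).
Proof.
move=> Hcomm a f; apply: functional_extensionality => st.
by rewrite /wt_scale -!actM Hcomm.
Qed.

Lemma homogeneous_subst x E : wt_homogeneous (fun f => wt_subst f x E).
Proof. by []. Qed.

Lemma iter_chain F : wt_monotone F -> wt_chain (fun k => iter k F wt0).
Proof. by move=> HF; elim=> [|k IH] st /=; [apply: le0 | apply: HF]. Qed.

Lemma lfp_unique F X : is_lfp add F X -> lfp add zero F = X.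
Proof.
move=> HX; rewrite /lfp; case: excluded_middle_informative => [?|[]]; last by exists X.
case: constructive_indefinite_description => Y HY /=.
apply: functional_extensionality => st; apply: (ocm_nat_ordered HM).
- exact: HY.2 X HX.1 st.
- exact: HX.2 Y HY.1 st.
Qed.

Lemma lfp_iter_sup F : wt_continuous F -> wt_sup (fun k => iter k F wt0) (lfp add zero F).
Proof.
move=> HF; have Hc := iter_chain (continuous_monotone HF).
have [X HX] := wt_sup_exists Hc.
suff -> : lfp add zero F = X by [].
apply: lfp_unique; split.
  apply: wt_sup_unique (HF _ _ Hc HX) _ => st.
  exact: sup_shift (wt_chain_at st Hc) (HX st).
move=> Y HY.
have Hle k : wt_le add (iter k F wt0) Y.
  by elim: k => [|k IH] st /=; [apply: le0 | rewrite -HY; apply: continuous_monotone].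
by move=> st; apply: (HX st).2 => k; apply: Hle.
Qed.

Section SupOfTransformers.
Variables (T : nat -> Wt -> Wt) (S : Wt -> Wt).
Hypothesis T_chain : forall f, wt_chain (fun k => T k f).
Hypothesis T_sup : forall f, wt_sup (fun k => T k f) (S f).

Lemma healthy_sup : (forall k, wt_healthy (T k)) -> wt_healthy S.
Proof.
move=> HT; split=> [c s Hc Hs st|| f g].
- apply: (sup_exchange (G := fun n k => T k (c n) st)) (T_sup s st) => [n|k].
    exact: T_sup.
  exact: healthy_cont (HT k) c s Hc Hs st.
- apply: wt_sup_unique (T_sup wt0) _.
  have -> : (fun k => T k wt0) = fun=> wt0.
    by apply: functional_extensionality => k; apply: healthy_strict.
  by move=> st; apply: sup_const.
- apply: wt_sup_unique (T_sup (wt_add add f g)) _.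
  have -> : (fun k => T k (wt_add add f g)) = fun k => wt_add add (T k f) (T k g).
    by apply: functional_extensionality => k; apply: healthy_additive.
  exact: wt_sup_add.
Qed.

Lemma homogeneous_sup : (forall k, wt_homogeneous (T k)) -> wt_homogeneous S.
Proof.
move=> HT a f; apply: wt_sup_unique (T_sup (wt_scale act a f)) _.
have -> : (fun k => T k (wt_scale act a f)) = fun k => wt_scale act a (T k f).
  by apply: functional_extensionality => k; apply: HT.
exact: healthy_cont (healthy_scale a) _ _ (T_chain f) (T_sup f).
Qed.

End SupOfTransformers.

Section Loop.
Variables (phi : state Var Val -> bool) (G : Wt -> Wt).

Definition while_step g X : Wt :=
  wt_add add (wt_guard zero (fun st => ~~ phi st) g) (wt_guard zero phi (G X)).

Definition while_approx k g : Wt := iter k (while_step g) wt0.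

Lemma while_approx_healthy k : wt_healthy G -> wt_healthy (while_approx k).
Proof.
move=> HG; elim: k => [|k IH]; first exact: healthy_zero.
exact: healthy_add (healthy_comp (healthy_guard _) healthy_id)
                   (healthy_comp (healthy_guard _) (healthy_comp HG IH)).
Qed.

Lemma while_approx_homogeneous k : wt_homogeneous G -> wt_homogeneous (while_approx k).
Proof.
move=> HG; elim: k => [|k IH]; first exact: homogeneous_zero.
exact: homogeneous_add (homogeneous_comp (homogeneous_guard _) homogeneous_id)
         (homogeneous_comp (homogeneous_guard _) (homogeneous_comp HG IH)).
Qed.

Hypothesis G_cont : wt_continuous G.

Lemma while_step_continuous g : wt_continuous (while_step g).
Proof.
exact: continuous_add (continuous_const _)
         (continuous_comp (healthy_cont (healthy_guard _)) G_cont).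
Qed.

Lemma while_approx_chain g : wt_chain (fun k => while_approx k g).
Proof. exact: iter_chain (continuous_monotone (while_step_continuous g)). Qed.

Lemma while_approx_sup g : wt_sup (fun k => while_approx k g) (lfp add zero (while_step g)).
Proof. exact: lfp_iter_sup (while_step_continuous g). Qed.

End Loop.

Lemma while_healthy phi G : wt_healthy G ->
  wt_healthy (fun f => lfp add zero (while_step phi G f)).
Proof.
move=> HG; have HGc := healthy_cont HG.
apply: healthy_sup (while_approx_chain phi HGc) (while_approx_sup phi HGc) _ => k.
exact: while_approx_healthy.
Qed.

Lemma while_homogeneous phi G : wt_continuous G -> wt_homogeneous G ->
  wt_homogeneous (fun f => lfp add zero (while_step phi G f)).
Proof.
move=> HGc HG.
apply: homogeneous_sup (while_approx_chain phi HGc) (while_approx_sup phi HGc) _ => k.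
exact: while_approx_homogeneous.
Qed.

Lemma wp_healthy (C : prog Var Val W) : wt_healthy (wp add zero act C).
Proof.
elim: C => [x E|C1 IH1 C2 IH2|phi C1 IH1 C2 IH2|C1 IH1 C2 IH2|a|phi C IH].
- exact: healthy_subst.
- exact: healthy_comp.
- exact: healthy_add (healthy_comp (healthy_guard _) IH1)
                     (healthy_comp (healthy_guard _) IH2).
- exact: healthy_add.
- exact: healthy_scale.
- exact: while_healthy.
Qed.

Lemma wp_homogeneous (C : prog Var Val W) :
  is_commutative mul -> wt_homogeneous (wp add zero act C).
Proof.
move=> Hcomm; elim: C => [x E|C1 IH1 C2 IH2|phi C1 IH1 C2 IH2|C1 IH1 C2 IH2|a|phi C IH].
- exact: homogeneous_subst.
- exact: homogeneous_comp.
- exact: homogeneous_add (homogeneous_comp (homogeneous_guard _) IH1)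
                         (homogeneous_comp (homogeneous_guard _) IH2).
- exact: homogeneous_add.
- exact: homogeneous_scale.
- exact: while_homogeneous (healthy_cont (wp_healthy C)) IH.
Qed.

End WpHealthiness.

Theorem mainTheorem2 (W M : Type) (mul : W -> W -> W) (one : W)
  (add : M -> M -> M) (zero : M) (act : W -> M -> M)
  (HW : is_monoid mul one)
  (HM : is_omega_continuous_module mul one add zero act)
  (Var : eqType) (Val : Type) (C : prog Var Val W) :
  (forall f g : Wt Var Val M,
      wt_le add f g -> wt_le add (wp add zero act C f) (wp add zero act C g)) /\
  wp add zero act C (@wt_zero Var Val M zero) = @wt_zero Var Val M zero /\
  (forall f g : Wt Var Val M,
      wp add zero act C (wt_add add f g)
      = wt_add add (wp add zero act C f) (wp add zero act C g)) /\
  (is_commutative mul ->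
   forall (a : W) (f : Wt Var Val M),
      wp add zero act C (wt_scale act a f) = wt_scale act a (wp add zero act C f)).
Proof.
have [Hcont Hstrict Hadd] := wp_healthy HM C.
split; first exact: (continuous_monotone HM Hcont).
by split=> //; split=> // Hcomm; apply: (wp_homogeneous HM).
Qed.
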